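(* Let $A$ be a finite set of options and consider $V\ge1$ votes, each a truncated ranking with possible ties, interpreted as in the context, with Llull matrix $v$. Let $T$ be the set of path-top choices of $v$. If $x,y\in A$, $x$ dominates $y$ in the sense of Pareto, and $y\in T$, then $x\in T$.
   Context: A truncated ranking with ties is a weak order on a subset of $A$ (the ranked options); for ranked options, $x$ is preferred to $y$ if strictly above, and ranked equally if tied; every ranked option is preferred to every unranked option; two unranked options are not compared. Llull matrix: $v_{xy}=(\#\{\text{votes preferring }x\text{ to }y\}+\tfrac12\#\{\text{votes ranking }x,y\text{ equally}\})/V$. Path scores: $v^*_{xy}=\max\min(v_{x_0x_1},\dots,v_{x_{m-1}x_m})$ over all paths $x_0\dots x_m$ ($m\ge1$, $x_0=x$, $x_m=y$, $x_i$ pairwise distinct). Ranking relation: $x\succeq y$ iff there is a path $x_0\dots x_m$ from $x$ to $y$ with $v^*_{x_ix_{i+1}}\ge v^*_{x_{i+1}x_i}$ for all $i<m$. $x$ is a path-top choice if $x\succeq z$ for all $z\ne x$. $x$ dominates $y$ in the sense of Pareto if every vote either prefers $x$ to $y$ or ranks them equally, and at least one vote prefers $x$ to $y$. *)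

From HB Require Import structures.
From mathcomp Require Import all_boot all_order all_algebra.
Set Implicit Arguments. Unset Strict Implicit. Unset Printing Implicit Defensive.
Import Order.TTheory GRing.Theory Num.Theory.
Local Open Scope ring_scope.

(* A truncated ranking with ties on the finite option set A: each option is
   either unranked (None) or ranked at level (Some k); smaller level = better.
   Every weak order on a subset of A is representable this way. *)
Definition ballot (A : finType) := A -> option nat.

Section Defs.
Variable A : finType.

Definition prefers (b : ballot A) (x y : A) : bool :=
  match b x, b y with
  | Some i, Some j => (i < j)%N
  | Some _, None => true
  | _, _ => false
  end.

Definition ranks_equal (b : ballot A) (x y : A) : bool :=
  match b x, b y with
  | Some i, Some j => i == j
  | _, _ => false
  end.

Definition llull (votes : seq (ballot A)) (x y : A) : rat :=
  ((count (fun b => prefers b x y) votes)%:R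
    + 2^-1 * (count (fun b => ranks_equal b x y) votes)%:R)
  / (size votes)%:R.

Definition path_min (v : A -> A -> rat) (s : seq A) : rat :=
  \big[Num.min/1]_(e <- zip s (behead s)) v e.1 e.2.

(* path score v*_{xy}: max over paths x = x_0, ..., x_m = y, m >= 1, with
   pairwise distinct vertices (the intermediate vertices form an n-tuple,
   n <= #|A|), of the minimum of v along the path. *)
Definition path_score (v : A -> A -> rat) (x y : A) : rat :=
  \big[Num.max/0]_(n < #|A|.+1)
    \big[Num.max/0]_(t : n.-tuple A | uniq (x :: rcons t y))
      path_min v (x :: rcons t y).

Definition ranks_above (v : A -> A -> rat) (x y : A) : Prop :=
  exists s : seq A, [/\ s != [::],
    path (fun a b => path_score v b a <= path_score v a b) x s
    & last x s = y].

Definition path_top (v : A -> A -> rat) (x : A) : Prop :=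
  forall z, z != x -> ranks_above v x z.

Definition pareto_dominates (votes : seq (ballot A)) (x y : A) : Prop :=
  all (fun b => prefers b x y || ranks_equal b x y) votes /\
  has (fun b => prefers b x y) votes.

End Defs.

(* If every vote ranks x at least as high as y, then in the Llull matrix the
   row of x dominates the row of y and the column of x is dominated by the
   column of y.  Swapping the endpoints of any path from y to x therefore
   gives a path from x to y that is at least as strong, so v*(x,y) >= v*(y,x)
   and x ranks above y.  Since the ranking relation is transitive, x ranks
   above everything y ranks above. *)
From mathcomp Require Import all_boot all_order all_algebra.
From mathcomp Require Import zify lra.
Import Order.TTheory GRing.Theory Num.Theory.

Local Open Scope ring_scope.

Section Llull.
Variable A : finType.
Implicit Types (b : ballot A) (votes : seq (ballot A)).

Definition weakly_prefers b (x y : A) : bool :=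
  prefers b x y || ranks_equal b x y.

(* Twice the contribution of a single vote to the Llull score of (a, c). *)
Definition half_points b (a c : A) : nat :=
  (2 * prefers b a c + ranks_equal b a c)%N.

Lemma half_points_col_le b (x y c : A) :
  weakly_prefers b x y -> (half_points b c x <= half_points b c y)%N.
Proof.
rewrite /weakly_prefers /half_points /prefers /ranks_equal.
by case: (b x) => [i|]; case: (b y) => [j|]; case: (b c) => [k|] //=; lia.
Qed.

Lemma half_points_row_le b (x y c : A) :
  weakly_prefers b x y -> (half_points b y c <= half_points b x c)%N.
Proof.
rewrite /weakly_prefers /half_points /prefers /ranks_equal.
by case: (b x) => [i|]; case: (b y) => [j|]; case: (b c) => [k|] //=; lia.
Qed.

Lemma llull_le votes (a c a' c' : A) :
  all (fun b => half_points b a c <= half_points b a' c')%N votes ->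
  llull votes a c <= llull votes a' c'.
Proof.
move=> le_points; apply: ler_wpM2r; first by rewrite invr_ge0 ler0n.
elim: votes le_points => [|b votes IH] //= /andP[le_b /IH].
move: le_b; rewrite -(ler_nat rat) /half_points !natrD => le_b le_votes.
lra.
Qed.

Lemma llull_col_le votes (x y c : A) :
  all (fun b => weakly_prefers b x y) votes ->
  llull votes c x <= llull votes c y.
Proof.
by move=> weak; apply/llull_le/(sub_all _ weak) => b; apply: half_points_col_le.
Qed.

Lemma llull_row_le votes (x y c : A) :
  all (fun b => weakly_prefers b x y) votes ->
  llull votes y c <= llull votes x c.
Proof.
by move=> weak; apply/llull_le/(sub_all _ weak) => b; apply: half_points_row_le.
Qed.

End Llull.

Lemma uniq_swap_ends (T : eqType) (x y : T) t :
  uniq (x :: rcons t y) = uniq (y :: rcons t x).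
Proof.
apply: perm_uniq; rewrite -rcons_cons perm_rcons perm_sym perm_cons.
by rewrite perm_rcons.
Qed.

Section PathScore.
Variables (A : finType) (v : A -> A -> rat).

Lemma path_min_cons2 (a c : A) s :
  path_min v [:: a, c & s] = Num.min (v a c) (path_min v (c :: s)).
Proof. by rewrite /path_min /= big_cons. Qed.

Lemma path_min_head_le (a b : A) s :
  (forall c, v a c <= v b c) -> path_min v (a :: s) <= path_min v (b :: s).
Proof.
case: s => [|c s] le_row; first by [].
by rewrite !path_min_cons2 le_min2.
Qed.

Lemma path_min_last_le (a b : A) :
  (forall c, v c a <= v c b) ->
  forall c s, path_min v (c :: rcons s a) <= path_min v (c :: rcons s b).
Proof.
by move=> le_col c s; elim: s c => [|d s IH] c /=; rewrite !path_min_cons2 le_min2.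
Qed.

Lemma path_score_swap_le (x y : A) :
  (forall c, v y c <= v x c) -> (forall c, v c x <= v c y) ->
  path_score v y x <= path_score v x y.
Proof.
move=> le_row le_col; apply: (big_ind2 (fun p q => p <= q)) => // [*|n _].
  exact: le_max2.
rewrite (eq_bigl (fun t : n.-tuple A => uniq (x :: rcons t y)));
  last by move=> t; rewrite uniq_swap_ends.
apply: (big_ind2 (fun p q => p <= q)) => // [*|t _]; first exact: le_max2.
apply: (le_trans (path_min_head_le _ _ _ le_row)).
exact: path_min_last_le.
Qed.

Lemma ranks_above_of_path_score (x y : A) :
  path_score v y x <= path_score v x y -> ranks_above v x y.
Proof. by move=> le_score; exists [:: y]; rewrite /= le_score. Qed.

Lemma ranks_above_trans (x y z : A) :
  ranks_above v x y -> ranks_above v y z -> ranks_above v x z.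
Proof.
move=> [s1 [s1_nil path1 <-]] [s2 [_ path2 <-]].
exists (s1 ++ s2); split.
- by case: s1 s1_nil {path1 path2}.
- by rewrite cat_path path1.
- by rewrite last_cat.
Qed.

Lemma path_top_of_ranks_above (x y : A) :
  ranks_above v x y -> path_top v y -> path_top v x.
Proof.
move=> xy top_y z _; have [-> // | zy] := eqVneq z y.
exact: ranks_above_trans xy (top_y z zy).
Qed.

End PathScore.

Theorem corollary4p2 (A : finType) (votes : seq (ballot A)) (x y : A) :
  (0 < size votes)%N ->
  pareto_dominates votes x y ->
  path_top (llull votes) y ->
  path_top (llull votes) x.
Proof.
move=> _ [weak _]; apply: path_top_of_ranks_above.
apply: ranks_above_of_path_score; apply: path_score_swap_le => c.
- exact: llull_row_le.
- exact: llull_col_le.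
Qed.
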